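(* Let $A=[a_1\ \cdots\ a_m]^T\in\mathbb{R}^{m\times n}$ and $b=(b_1,\dots,b_m)^T\in\mathbb{R}^m$, let $c_i(x)=a_i^Tx-b_i$, $D(x)=\mathrm{diag}(c_1(x),\dots,c_m(x))$, and let $C(x)=\begin{bmatrix}A^T\\ D(x)\end{bmatrix}\in\mathbb{R}[x]^{(n+m)\times m}$. Then the linear function $Ax-b$ is nonsingular if and only if there exists a matrix polynomial $L(x)\in\mathbb{R}[x]^{m\times(n+m)}$ with $L(x)C(x)=I_m$. Moreover, when $Ax-b$ is nonsingular, $L(x)$ can be chosen with $\deg(L)\le m-\mathrm{rank}\,A$.
   Context: The linear function $Ax-b$ is called nonsingular if $\mathrm{rank}\,C(u)=m$ for all $u\in\mathbb{C}^n$ (equivalently, for every $u\in\mathbb{C}^n$, the vectors $a_i$ with $c_i(u)=0$ are linearly independent). $\deg(L)$ is the maximum degree of the entries of $L$; $I_m$ is the $m\times m$ identity matrix. *)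

From HB Require Import structures.
From mathcomp Require Import all_boot all_order all_algebra.
From mathcomp Require Import reals.
From mathcomp Require Import complex.
From mathcomp Require Import mpoly.
Set Implicit Arguments. Unset Strict Implicit. Unset Printing Implicit Defensive.
Import Order.TTheory GRing.Theory Num.Theory.
Local Open Scope ring_scope.

Definition toC (R : realType) (r : R) : complex R := (r%:C)%C.

Definition cvec (R : realType) (m n : nat) (A : 'M[R]_(m, n)) (b : 'cV[R]_m)
  (u : 'cV[complex R]_n) : 'rV[complex R]_m :=
  \row_i ((map_mx (@toC R) A *m u) i 0 - toC (b i 0)).

Definition Cmat_at (R : realType) (m n : nat) (A : 'M[R]_(m, n)) (b : 'cV[R]_m)
  (u : 'cV[complex R]_n) : 'M[complex R]_(n + m, m) :=
  col_mx (map_mx (@toC R) A^T) (diag_mx (cvec A b u)).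

Definition nonsingular (R : realType) (m n : nat) (A : 'M[R]_(m, n)) (b : 'cV[R]_m) : Prop :=
  forall u : 'cV[complex R]_n, \rank (Cmat_at A b u) = m.

Definition cpoly (R : realType) (m n : nat) (A : 'M[R]_(m, n)) (b : 'cV[R]_m) (i : 'I_m)
  : {mpoly R[n]} :=
  \sum_(j < n) A i j *: 'X_j - (b i 0)%:MP.

Definition Cpolymat (R : realType) (m n : nat) (A : 'M[R]_(m, n)) (b : 'cV[R]_m)
  : 'M[{mpoly R[n]}]_(n + m, m) :=
  col_mx (map_mx (fun a : R => a%:MP) A^T) (diag_mx (\row_i cpoly A b i)).

(* deg(L) <= d : every entry has total degree <= d (msize p = 1 + deg p, 0 for p = 0) *)
Definition mxdeg_le (R : realType) (n p q : nat) (L : 'M[{mpoly R[n]}]_(p, q)) (d : nat) : Prop :=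
  forall i j, (msize (L i j) <= d.+1)%N.

(* Row i of L is a polynomial row vector x with x C = e_i, and we build it
   one set S of rows at a time, by induction on |S|, within the degree budget
   |S| - rank A_S, where A_S keeps the rows of A indexed by S.  If A_S u = b_S
   has a real solution u, the constraints in S are all active at u, so
   nonsingularity makes the rows of A_S independent and a constant x
   suffices.  Otherwise (Fredholm) some dependency mu of the rows of A_S has
   mu b <> 0, so sum_k mu_k c_k(x) = -mu b is a nonzero constant and
   1 = sum_k w_k c_k with constant weights.  For mu_k <> 0, deleting row k
   keeps the rank, and a solution on S \ k times c_k solves the system on S
   for the right-hand side c_k e_i, at one degree more; the w_k-combination
   of these solves it for e_i.  Conversely, evaluating L C = I at a complex
   point u exhibits a left inverse of C(u). *)

From HB Require Import structures.
From mathcomp Require Import all_boot all_order all_algebra.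
From mathcomp Require Import reals complex mpoly.
From Stdlib Require Import Classical.
From mathcomp Require Import ring zify.
Set Implicit Arguments. Unset Strict Implicit. Unset Printing Implicit Defensive.
Import Order.TTheory GRing.Theory Num.Theory.
Local Open Scope ring_scope.

Section DegreeBound.
Variables (R : idomainType) (n : nat).

Definition mdeg_leq (d : nat) : {pred {mpoly R[n]}} := fun p => (msize p <= d.+1)%N.

Lemma mdeg_leqE d p : (p \in mdeg_leq d) = (msize p <= d.+1)%N.
Proof. by []. Qed.

Fact mdeg_leq_zmod_closed d : zmod_closed (mdeg_leq d).
Proof.
split=> [|p q]; first by rewrite mdeg_leqE msize0.
rewrite !mdeg_leqE => dp dq; apply: leq_trans (msizeD_le _ _) _.
by rewrite geq_max dp msizeN.
Qed.

HB.instance Definition _ d :=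
  GRing.isZmodClosed.Build {mpoly R[n]} (mdeg_leq d) (mdeg_leq_zmod_closed d).

Lemma mdeg_leqW d d' : (d <= d')%N -> {subset mdeg_leq d <= mdeg_leq d'}.
Proof. by move=> le_dd' p; rewrite !mdeg_leqE => /leq_trans; apply. Qed.

Lemma mdeg_leqC c d : c%:MP \in mdeg_leq d.
Proof. by rewrite mdeg_leqE msizeC; case: (c != 0). Qed.

Lemma mdeg_leqX j : 'X_j \in mdeg_leq 1.
Proof. by rewrite mdeg_leqE msizeX mdeg1. Qed.

Lemma mdeg_leqM d1 d2 p q :
  p \in mdeg_leq d1 -> q \in mdeg_leq d2 -> p * q \in mdeg_leq (d1 + d2).
Proof.
have [->|p0] := eqVneq p 0; first by rewrite mul0r => *; apply: rpred0.
have [->|q0] := eqVneq q 0; first by rewrite mulr0 => *; apply: rpred0.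
rewrite !mdeg_leqE msizeM // => dp dq.
have : (0 < msize p)%N by rewrite lt0n msize_poly_eq0.
lia.
Qed.

Lemma mdeg_leqZ d c p : p \in mdeg_leq d -> c *: p \in mdeg_leq d.
Proof. by rewrite -mul_mpolyC -[d]add0n; apply/mdeg_leqM/mdeg_leqC. Qed.

Lemma mxOver_mdeg_mulmx d1 d2 k l r (M : 'M[{mpoly R[n]}]_(k, l)) (N : 'M_(l, r)) :
  M \is a mxOver (mdeg_leq d1) -> N \is a mxOver (mdeg_leq d2) ->
  M *m N \is a mxOver (mdeg_leq (d1 + d2)).
Proof.
move=> /mxOverP dM /mxOverP dN; apply/mxOverP => i j; rewrite mxE.
by apply: rpred_sum => t _; apply: mdeg_leqM.
Qed.

Lemma mxOver_mdeg_scale d1 d2 k l c (M : 'M[{mpoly R[n]}]_(k, l)) :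
  c \in mdeg_leq d1 -> M \is a mxOver (mdeg_leq d2) ->
  c *: M \is a mxOver (mdeg_leq (d1 + d2)).
Proof. by move=> dc /mxOverP dM; apply/mxOverP => i j; rewrite mxE mdeg_leqM. Qed.

Lemma mxOver_map_mpolyC d k l (M : 'M[R]_(k, l)) :
  map_mx (@mpolyC n R) M \is a mxOver (mdeg_leq d).
Proof. by apply/mxOverP => i j; rewrite mxE mdeg_leqC. Qed.

End DegreeBound.
Arguments mdeg_leq {R n} d.

Lemma mxOver_row_mx (T : Type) (S : {pred T}) k l1 l2 (M1 : 'M[T]_(k, l1)) (M2 : 'M_(k, l2)) :
  M1 \is a mxOver S -> M2 \is a mxOver S -> row_mx M1 M2 \is a mxOver S.
Proof.
move=> /mxOverP S1 /mxOverP S2; apply/mxOverP => i j.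
by rewrite mxE; case: split_ordP => t _; [apply: S1 | apply: S2].
Qed.

Section RowSelection.
Variables (F : fieldType) (m : nat).

Definition setmx (S : {set 'I_m}) : 'M[F]_m := diag_mx (\row_j (j \in S)%:R).

Lemma setmxT : setmx setT = 1%:M.
Proof. by apply/matrixP => i j; rewrite !mxE in_setT mulr1n. Qed.

Lemma mul_mx_setmx k (M : 'M[F]_(k, m)) S j l :
  (M *m setmx S) j l = M j l * (l \in S)%:R.
Proof. by rewrite mul_mx_diag !mxE. Qed.

Lemma row_setmxM n S j (M : 'M[F]_(m, n)) :
  row j (setmx S *m M) = (j \in S)%:R *: row j M.
Proof. by apply/rowP => l; rewrite mul_diag_mx !mxE. Qed.

Lemma rank_setmxM_leq n S (M : 'M[F]_(m, n)) : (\rank (setmx S *m M) <= #|S|)%N.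
Proof.
apply: leq_trans (rank_leq_row (rowsub (@enum_val _ (mem S)) M)).
apply/mxrankS/row_subP => j; rewrite row_setmxM.
have [jS|_] := boolP (j \in S); last by rewrite scale0r sub0mx.
rewrite scale1r -(enum_rankK_in jS jS) -row_rowsub; exact: row_sub.
Qed.

Lemma setmxD1_sub n S k (M : 'M[F]_(m, n)) (mu : 'rV_m) :
  mu *m (setmx S *m M) = 0 -> mu 0 k != 0 ->
  (setmx S *m M <= setmx (S :\ k) *m M)%MS.
Proof.
move=> muM muk; apply/row_subP => j; rewrite row_setmxM.
have [->|jk] := eqVneq j k; last first.
  by rewrite -[j \in S]andTb -jk -in_setD1 -row_setmxM row_sub.
have [kS|_] := boolP (k \in S); last by rewrite scale0r sub0mx.
have split_k : mu *m (setmx S *m M)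
    = mu *m (setmx (S :\ k) *m M) + mu 0 k *: row k M.
  rewrite !mulmx_sum_row [in LHS](bigD1 k) //= [in RHS](bigD1 k) //=.
  rewrite !row_setmxM setD11 kS scale1r scale0r scaler0 add0r addrC; congr (_ + _).
  by apply: eq_bigr => i ik; rewrite !row_setmxM in_setD1 ik.
have : mu *m (setmx (S :\ k) *m M) = - mu 0 k *: row k M.
  by apply/eqP; rewrite scaleNr -addr_eq0 -split_k muM.
move=> /(canLR (scalerK _)) <-; last by rewrite oppr_eq0.
by rewrite scale1r scalemx_sub ?submxMl.
Qed.
End RowSelection.
Arguments setmx {F m} S.

Lemma fredholm_solvable (F : fieldType) p q (M : 'M[F]_(p, q)) (y : 'cV_p) :
  (forall z : 'rV_p, z *m M = 0 -> z *m y = 0) -> exists x, M *m x = y.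
Proof.
move=> ortho; have /submxP [x /(congr1 trmx)] : (y^T <= M^T)%MS.
  rewrite submxE -trmx_eq0 trmx_mul trmxK; apply/eqP/row_matrixP => i.
  rewrite row_mul row0 ortho // -row_mul -[M in _ *m M]trmxK -trmx_mul.
  by rewrite mulmx_coker trmx0 row0.
by rewrite trmx_mul !trmxK => ->; exists x^T.
Qed.

Section LeftInverse.
Variables (R : realType) (m n : nat) (A : 'M[R]_(m, n)) (b : 'cV[R]_m).

Local Notation C := (Cpolymat A b).

Lemma cpoly_mdeg i : cpoly A b i \in mdeg_leq 1.
Proof.
by rewrite rpredB ?mdeg_leqC // rpred_sum // => j _; rewrite mdeg_leqZ ?mdeg_leqX.
Qed.

Lemma Cpolymat_mdeg : C \is a mxOver (mdeg_leq 1).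
Proof.
apply/mxOverP => i j; rewrite mxE; case: split_ordP => t _; rewrite !mxE ?mdeg_leqC //.
by case: eqP; rewrite ?mulr1n ?mulr0n ?cpoly_mdeg ?rpred0.
Qed.

Lemma sum_dependency_cpoly (mu : 'rV[R]_m) : mu *m A = 0 ->
  \sum_k (mu 0 k)%:MP * cpoly A b k = - ((mu *m b) 0 0)%:MP.
Proof.
move=> muA; under eq_bigr => k _ do rewrite mulrBr mulr_sumr.
rewrite sumrB exchange_big /= big1 ?sub0r => [|l _].
  rewrite mxE [in RHS]raddf_sum -!sumrN.
  by apply: eq_bigr => k _; rewrite -mpolyCM.
under eq_bigr => k _ do rewrite mul_mpolyC scalerA.
have /rowP/(_ l) := muA; rewrite !mxE => muA_l.
by rewrite -scaler_suml muA_l scale0r.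
Qed.

Definition solvable_on (S : {set 'I_m}) (d : nat) (r : 'rV[{mpoly R[n]}]_m) :=
  exists2 x : 'rV_(n + m), x \is a mxOver (mdeg_leq d) &
    forall j, j \in S -> (x *m C) 0 j = r 0 j.

Lemma solvable_onW S d d' r : (d <= d')%N -> solvable_on S d r -> solvable_on S d' r.
Proof. by move=> le_dd' [x dx xr]; exists x => //; apply: mxOverS (mdeg_leqW le_dd') _ dx. Qed.

Lemma solvable_on0 S d : solvable_on S d 0.
Proof. by exists 0 => [|j _]; [apply/mxOver0/rpred0 | rewrite mul0mx]. Qed.

Lemma solvable_onD S d r1 r2 :
  solvable_on S d r1 -> solvable_on S d r2 -> solvable_on S d (r1 + r2).
Proof.
move=> [x1 dx1 x1r] [x2 dx2 x2r]; exists (x1 + x2) => [|j jS]; first exact: rpredD.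
by have := x1r j jS; have := x2r j jS; rewrite mulmxDl !mxE => -> ->.
Qed.

Lemma solvable_onZ S d c r : solvable_on S d r -> solvable_on S d (c%:MP *: r).
Proof.
move=> [x dx xr]; exists (c%:MP *: x) => [|j jS].
  by apply: (mxOver_mdeg_scale (d1 := 0)) dx; apply: mdeg_leqC.
by have := xr j jS; rewrite -scalemxAl !mxE => ->.
Qed.

Lemma solvable_on_mul_cpoly S k d r :
  solvable_on (S :\ k) d r -> r \is a mxOver (mdeg_leq d.+1) ->
  solvable_on S d.+1 (cpoly A b k *: r).
Proof.
move=> [x dx xr] /mxOverP dr.
have /mxOverP dy := mxOver_mdeg_mulmx dx Cpolymat_mdeg.
have [y yE] : {y | x *m C = y} by exists (x *m C).
rewrite yE in xr dy.
(* [c_k *: x] already solves the rows of [S :\ k]; the correction in the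
   D-coordinate [k] takes care of row [k], about which [x] says nothing. *)
exists (cpoly A b k *: x + (r 0 k - y 0 k) *: delta_mx 0 (rshift n k)) => [|j jS].
  rewrite rpredD ?(mxOver_mdeg_scale (cpoly_mdeg k)) // -[d.+1]addn0.
  apply: mxOver_mdeg_scale; last by rewrite -(map_delta_mx (@mpolyC n R)) mxOver_map_mpolyC.
  by rewrite rpredB ?dr // -[d.+1]addn1 dy.
rewrite mulmxDl -!scalemxAl yE -rowE rowKd !mxE.
have [<-|jk] := eqVneq k j; first by rewrite mulr1n; ring.
by rewrite mulr0n mulr0 addr0 xr // in_setD1 eq_sym jk.
Qed.

Lemma solvable_on_dependent S d r (mu : 'rV[R]_m) :
  mu *m (setmx S *m A) = 0 -> (mu *m (setmx S *m b)) 0 0 != 0 ->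
  (forall k, k \in S -> mu 0 k != 0 -> solvable_on S d (cpoly A b k *: r)) ->
  solvable_on S d r.
Proof.
move=> muA mub solv_k; set nu := mu *m setmx S.
have nuA : nu *m A = 0 by rewrite -mulmxA.
set beta := (mu *m (setmx S *m b)) 0 0 in mub.
have sum_nu : \sum_k (- (nu 0 k / beta))%:MP * cpoly A b k = 1.
  under eq_bigr => k _ do
    rewrite -mulNr [_ * beta^-1]mulrC mpolyCM mpolyCN mulrN mulNr -mulrA.
  rewrite sumrN -mulr_sumr sum_dependency_cpoly // -mulmxA -/beta mulrN opprK.
  by rewrite -mpolyCM mulVf ?mpolyC1.
rewrite -[r]scale1r -sum_nu scaler_suml; apply: big_ind => [|r1 r2|k _].
- exact: solvable_on0.
- exact: solvable_onD.
have [->|] := eqVneq (nu 0 k) 0.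
  by rewrite mul0r oppr0 mpolyC0 mul0r scale0r; apply: solvable_on0.
rewrite -scalerA mul_mx_setmx => nuk; apply: solvable_onZ.
have [kS|/negbTE kNS] := boolP (k \in S); last by rewrite kNS mulr0 eqxx in nuk.
by rewrite kS mulr1 in nuk; apply: solv_k.
Qed.

Lemma cvec_real (u : 'cV[R]_n) :
  cvec A b (map_mx (@toC R) u) = map_mx (@toC R) (A *m u - b)^T.
Proof. by apply/rowP => j; rewrite /cvec -(map_mxM (real_complex R)) !mxE /toC rmorphB. Qed.

Section Nonsingular.
Hypothesis nonsing : nonsingular A b.

Lemma nonsingular_active_free S (u : 'cV[R]_n) :
  setmx S *m (A *m u) = setmx S *m b ->
  forall mu : 'rV[R]_m, mu *m (setmx S *m A) = 0 -> mu *m setmx S = 0.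
Proof.
move=> active mu muA.
have /row_fullP [B BC] : row_full (Cmat_at A b (map_mx (@toC R) u)).
  by rewrite /row_full nonsing.
have slack0 j : j \in S -> (A *m u - b) j 0 = 0.
  move=> jS; have /matrixP/(_ j 0) := active.
  by rewrite !mul_diag_mx !mxE jS !mul1r => ->; rewrite subrr.
have nuE j : (mu *m setmx S) 0 j = mu 0 j * (j \in S)%:R by rewrite mul_mx_setmx.
have nuA : mu *m setmx S *m A = 0 by rewrite -mulmxA.
move: (mu *m setmx S) nuE nuA => nu nuE nuA.
set z := map_mx (@toC R) nu^T.
have Cz : Cmat_at A b (map_mx (@toC R) u) *m z = 0.
  rewrite /Cmat_at cvec_real mul_col_mx mul_diag_mx -col_mx0; congr col_mx.
    by rewrite -(map_mxM (real_complex R)) -trmx_mul nuA trmx0 map_mx0.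
  apply/matrixP => j c; rewrite !mxE ord1 nuE /toC.
  have [jS|_] := boolP (j \in S); last by rewrite mulr0 rmorph0 mulr0.
  by have := slack0 j jS; rewrite !mxE => ->; rewrite rmorph0 mul0r.
apply: trmx_inj; apply/matrixP => i j; move/matrixP: (congr1 (mulmx B) Cz) => /(_ i j).
by rewrite mulmxA BC mul1mx mulmx0 !mxE; apply: complexI.
Qed.

Lemma solvable_on_consistent S (rho : 'rV[R]_m) :
  (forall mu : 'rV[R]_m, mu *m (setmx S *m A) = 0 -> mu *m (setmx S *m b) = 0) ->
  solvable_on S 0 (map_mx (@mpolyC n R) rho).
Proof.
move=> /fredholm_solvable [u]; rewrite -mulmxA => /nonsingular_active_free free.
have [v Av] : exists v, setmx S *m A *m v = setmx S *m rho^T.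
  by apply: fredholm_solvable => z /free zS; rewrite mulmxA zS mul0mx.
exists (row_mx (map_mx (@mpolyC n R) v^T) 0) => [|j jS].
  by rewrite mxOver_row_mx ?mxOver_map_mpolyC //; apply/mxOver0/rpred0.
rewrite mul_row_col mul0mx addr0 -[map_mx _ A^T]/(map_mx (@mpolyC n R) A^T).
rewrite -map_mxM -trmx_mul !mxE.
by have /matrixP/(_ j 0) := Av; rewrite -mulmxA !mul_diag_mx !mxE jS !mul1r => ->.
Qed.

Lemma solvable_on_const S (rho : 'rV[R]_m) :
  solvable_on S (#|S| - \rank (setmx S *m A)) (map_mx (@mpolyC n R) rho).
Proof.
elim: {S}_.+1 {-2}S (ltnSn #|S|) => // N IH S ltSN.
have [[mu [muA mub]]|consistent] := classic (exists mu : 'rV[R]_m,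
    mu *m (setmx S *m A) = 0 /\ (mu *m (setmx S *m b)) 0 0 != 0).
  apply: (solvable_on_dependent muA mub) => k kS muk.
  have rank_le := mxrankS (setmxD1_sub muA muk).
  have rank_Sk := rank_setmxM_leq (S :\ k) A.
  have card_S : #|S| = #|S :\ k|.+1 by rewrite (cardsD1 k S) kS.
  apply: solvable_onW (solvable_on_mul_cpoly (IH (S :\ k) _) _).
  - by rewrite card_S -subSn // leq_sub2l.
  - by rewrite -ltnS -card_S.
  - exact: mxOver_map_mpolyC.
apply: (solvable_onW (leq0n _)); apply: solvable_on_consistent => mu muA.
apply/matrixP => i j; rewrite !ord1 [RHS]mxE.
by apply/eqP/negPn/negP => nz; apply: consistent; exists mu.
Qed.

Lemma left_inverse_of_nonsingular :
  exists L : 'M[{mpoly R[n]}]_(m, n + m), L *m C = 1%:M /\ mxdeg_le L (m - \rank A).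
Proof.
have /fin_all_exists2 [x dx xC] (i : 'I_m) : exists2 x : 'rV_(n + m),
    x \is a mxOver (mdeg_leq (m - \rank A)) & x *m C = delta_mx 0 i.
  have [x dx xC] := solvable_on_const setT (delta_mx 0 i).
  rewrite cardsT card_ord setmxT mul1mx in dx; exists x => //.
  by apply/rowP => j; rewrite xC ?in_setT // map_delta_mx.
exists (\matrix_i x i); split.
  by apply/row_matrixP => i; rewrite row_mul rowK row1 xC.
by move=> i j; rewrite mxE; apply: (mxOverP (dx i)).
Qed.

End Nonsingular.

Lemma nonsingular_of_left_inverse (L : 'M[{mpoly R[n]}]_(m, n + m)) :
  L *m C = 1%:M -> nonsingular A b.
Proof.
move=> LC u; pose ev := mmap (real_complex R) (fun l => u l 0).
have evC : map_mx ev C = Cmat_at A b u.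
  rewrite /Cpolymat /Cmat_at map_col_mx map_diag_mx; congr col_mx.
    by apply/matrixP => l j; rewrite !mxE /ev mmapC.
  congr diag_mx; apply/rowP => j; rewrite !mxE /cpoly /ev rmorphB /= mmapC.
  rewrite rmorph_sum /=; congr (_ - _); apply: eq_bigr => l _.
  by rewrite mmapZ mmapX mmap1U !mxE.
apply/eqP/row_fullP; exists (map_mx ev L).
by rewrite -evC -map_mxM LC map_mx1.
Qed.

End LeftInverse.

Unset Implicit Arguments.

Theorem proposition4p1 (R : realType) (m n : nat) (A : 'M[R]_(m, n)) (b : 'cV[R]_m) :
  (nonsingular A b <->
     exists L : 'M[{mpoly R[n]}]_(m, n + m), L *m Cpolymat A b = 1%:M)
  /\
  (nonsingular A b ->
     exists L : 'M[{mpoly R[n]}]_(m, n + m),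
       L *m Cpolymat A b = 1%:M /\ mxdeg_le L (m - \rank A)).
Proof.
split; last exact: left_inverse_of_nonsingular.
split; last by case=> L; apply: nonsingular_of_left_inverse.
by case/left_inverse_of_nonsingular => L [LC _]; exists L.
Qed.
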